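(* Let $M,N$ be equivalent canonical dtlas such that $M$ is a dtpla with $P_M=\{\hat p_1,\dots,\hat p_n\}$ and $N$ is a dtop. Let $\varphi$ be the aheadness mapping from $N$ to $M$ and define $\psi(q)=(\varphi(q,\hat p_1),\dots,\varphi(q,\hat p_n))$ for $q\in Q_N$. Then $\psi$ is a bijection between $Q_N$ and $\mathrm{diftup}(M)$.
   Context: Trees and patterns. $T_\Delta(Z)$ is the set of trees over ranked alphabet $\Delta$ with extra nullary symbols $Z$; $t/v$ is the subtree at node $v\in\mathbb N_+^*$; $\bot$ is a special nullary symbol; $V_\bot(t)$ is the set of nodes of $t$ labelled $\bot$. For trees, $t\sqsubseteq t'$ means $t'$ is obtained from $t$ by replacing some occurrences of $\bot$ by trees; $\sqcap T$ is the greatest lower bound of a finite nonempty set $T$ of trees (largest common prefix with $\bot$ at the highest nodes of disagreement). A $\Sigma$-context is $C\in T_\Sigma(\{\bot\})$ with exactly one occurrence of $\bot$; $\mathcal C_\Sigma$ is their set; $C[t]$ replaces $\bot$ by $t$. Dtlas. A dtla $M$ from $\Sigma$ to $\Delta$ consists of a finite set $Q_M$ of states, a total deterministic bottom-up tree automaton with finite state set $P_M$ and transitions $\delta(a,p_1,\dots,p_k)$, extended to $\delta_M:T_\Sigma\to P_M$ ($[\![p]\!]_M=\delta_M^{-1}(p)$), axioms $A_M(p)\in T_\Delta(Q_M(\{x_0\}))$, and at most one rule $q(a(x_1\langle p_1\rangle,\dots,x_k\langle p_k\rangle))\to\mathrm{rhs}_M(q,a,p_1,\dots,p_k)\in T_\Delta(Q_M(X_k))$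 per $q,a,p_1,\dots,p_k$. Semantics: $q_M(a(s_1,\dots,s_k))=\mathrm{rhs}_M(q,a,\delta_M(s_1),\dots,\delta_M(s_k))[q'(x_i)\leftarrow q'_M(s_i)]$, $M(s)=A_M(\delta_M(s))[q(x_0)\leftarrow q_M(s)]$; two dtlas are equivalent if $[\![M]\!]=[\![N]\!]$. Total: $[\![M]\!]$ total. A dtop is a dtla with a single look-ahead state $\bot$. A dtpla is a dtla with $|P_M|\ge2$. $M(C[p])\in T_\Delta(Q_M\times P_M)$ is the output on $C\in\mathcal C_\Sigma$ with the hole treated as a leaf of look-ahead state $p$ and $q_M(p)=\langle q,p\rangle$; for a dtop $N$, $N(C)=N(C[\bot])$. A state $q$ is reachable if $\langle q,p\rangle$ labels a node of $M(C[p])$ for some $C,p$. $M$ is la-uniform if there is $\rho_M:Q_M\to P_M$ with domain of $[\![q]\!]_M$ equal to $[\![\rho_M(q)]\!]_M$, every $q(x_0)$ in $A_M(p)$ having $\rho_M(q)=p$, every $q'(x_i)$ in $\mathrm{rhs}_M(q,a,p_1,\dots,p_k)$ having $\rho_M(q')=p_i$, and the rule for $q,a,p_1,\dots,p_k$ existing iff $\delta(a,p_1,\dots,p_k)=\rho_M(q)$. Earliest: no state $q$ and $d\in\Delta$ such that $q(s)$ has root label $d$ for all $s$ in the domain of $[\![q]\!]$. Canonical: total, la-uniform, earliest, all states reachable, and distinct states have distinct translations. $\mathrm{pref}(M,C)=\sqcap\{M(C[\hat p_1]),\dots,M(C[\hat p_n])\}$ and $\mathrm{diftup}(M)=\{(M(C[\hat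 p_1])/v,\dots,M(C[\hat p_n])/v)\mid C\in\mathcal C_\Sigma,\ v\in V_\bot(\mathrm{pref}(M,C))\}$. Aheadness mapping: the unique $\varphi:Q_N\times P_M\to T_\Delta(Q_M\times P_M)$ with $M(C[p])=N(C)[\langle q,\bot\rangle\leftarrow\varphi(q,p)\mid q\in Q_N]$ for all $C\in\mathcal C_\Sigma$, $p\in P_M$. *)

From mathcomp Require Import all_boot.
Set Implicit Arguments. Unset Strict Implicit. Unset Printing Implicit Defensive.

(* Trees.  [tree F L]: internal nodes labelled by symbols of F, leaves *)
(* labelled by the extra nullary symbols L.  T_F(L) = well-ranked ones. *)
(* Nodes are addressed by sequences of 0-based child indices.          *)
Inductive tree (F L : Type) : Type :=
| Leaf of L
| Node of F & seq (tree F L).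
Arguments Leaf {F L}.
Arguments Node {F L}.

Record ralph := RAlph { sym :> finType; rank : sym -> nat }.

Section Trees.
Variables (F : Type).

Fixpoint wr (ar : F -> nat) L (t : tree F L) : bool :=
  match t with
  | Leaf _ => true
  | Node a ts => (size ts == ar a) && all (@wr ar L) ts
  end.

Fixpoint leaves L (t : tree F L) : seq L :=
  match t with
  | Leaf l => [:: l]
  | Node _ ts => flatten (map (@leaves L) ts)
  end.

Fixpoint tbind L L' (f : L -> tree F L') (t : tree F L) : tree F L' :=
  match t with
  | Leaf l => f l
  | Node a ts => Node a (map (tbind f) ts)
  end.

Definition tmapl L L' (f : L -> L') (t : tree F L) : tree F L' :=
  tbind (fun l => Leaf (f l)) t.

Fixpoint optseq A (s : seq (option A)) : option (seq A) :=
  match s with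
  | [::] => Some [::]
  | o :: s' => match o, optseq s' with
               | Some x, Some xs => Some (x :: xs)
               | _, _ => None
               end
  end.

Fixpoint tbindo L L' (f : L -> option (tree F L')) (t : tree F L)
  : option (tree F L') :=
  match t with
  | Leaf l => f l
  | Node a ts => omap (Node a) (optseq (map (tbindo f) ts))
  end.

Fixpoint subtree L (t : tree F L) (v : seq nat) : option (tree F L) :=
  match v with
  | [::] => Some t
  | i :: v' => match t with
               | Leaf _ => None
               | Node _ ts => match onth ts i with
                              | Some t' => subtree t' v'
                              | None => None
                              end
               end
  end.

Definition root_is L (d : F) (t : tree F L) : Prop :=
  match t with Node d' _ => d' = d | Leaf _ => False end.
End Trees.

(* greatest lower bound; the special symbol bot is [Leaf None] *)
Section Glb.
Variables (F L : eqType).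

Fixpoint meet (t u : tree F (option L)) {struct t} : tree F (option L) :=
  match t, u with
  | Leaf x, Leaf y => if x == y then Leaf x else Leaf None
  | Node a ts, Node b us =>
      if (a == b) && (size ts == size us) then
        Node a ((fix zm (ts us : seq (tree F (option L))) :=
                  match ts, us with
                  | t1 :: ts', u1 :: us' => meet t1 u1 :: zm ts' us'
                  | _, _ => [::]
                  end) ts us)
      else Leaf None
  | _, _ => Leaf None
  end.

Definition lift_bot (t : tree F L) : tree F (option L) := tmapl (@Some L) t.

Definition glb (ts : seq (tree F L)) : tree F (option L) :=
  match ts with
  | [::] => Leaf None
  | t :: ts' => foldr (fun u acc => meet (lift_bot u) acc) (lift_bot t) ts'
  end.

Definition is_bot_node (t : tree F (option L)) (v : seq nat) : Prop :=
  subtree t v = Some (Leaf None).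
End Glb.

(* - [ax p] = A_M(p) : leaves q stand for q(x0);                        *)
(* - [rhs q a ps] = rhs_M(q,a,p1..pk) (None = no rule); a leaf (q',i)   *)
(*   stands for q'(x_{i+1}) (0-based child index).                      *)
Record dtla (S D : ralph) := Dtla {
  Q : finType;
  P : finType;
  trans : S -> seq P -> P;
  ax : P -> tree D Q;
  rhs : Q -> S -> seq P -> option (tree D (Q * nat))
}.
Arguments Q {S D}.
Arguments P {S D}.
Arguments trans {S D} d _ _.
Arguments ax {S D} d _.
Arguments rhs {S D} d _ _ _.

Section Dtla.
Variables (S D : ralph) (M : dtla S D).

Definition wf_dtla : Prop :=
  (forall p, wr (@rank D) (ax M p)) /\
  (forall q a ps r, rhs M q a ps = Some r ->
     [/\ size ps = rank a, wr (@rank D) r &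
         forall q' i, (q', i) \in leaves r -> i < rank a]).

Section Run.
(* input trees with leaves L, each leaf l being a hole of look-ahead state lav l *)
Variables (L : Type) (lav : L -> P M).

Fixpoint delta (t : tree S L) : P M :=
  match t with
  | Leaf l => lav l
  | Node a ts => trans M a (map delta ts)
  end.

(* qsem t q = q_M(t); on a hole leaf l, q_M(l) = <q, l> *)
Fixpoint qsem (t : tree S L) : Q M -> option (tree D (Q M * L)) :=
  match t with
  | Leaf l => fun q => Some (Leaf (q, l))
  | Node a ts => fun q =>
      let fs := map qsem ts in
      match rhs M q a (map delta ts) with
      | None => None
      | Some r => tbindo (fun x : Q M * nat => nth (fun _ => None) fs x.2 x.1) r
      end
  end.

Definition out (t : tree S L) : option (tree D (Q M * L)) :=
  tbindo (fun q => qsem t q) (ax M (delta t)).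
End Run.

Definition ground := tree S void.
Definition no_lav (v : void) : P M := of_void _ v.
Definition forget (t : tree D (Q M * void)) : tree D void :=
  tbind (fun x => Leaf x.2) t.

Definition qtrans (q : Q M) (s : ground) : option (tree D void) :=
  omap forget (qsem no_lav s q).
Definition transl (s : ground) : option (tree D void) :=
  omap forget (out no_lav s).

Definition context (C : tree S unit) : Prop :=
  wr (@rank S) C /\ size (leaves C) = 1%N.

Definition out_ctx (C : tree S unit) (p : P M) : option (tree D (Q M * P M)) :=
  out id (tmapl (fun _ => p) C).

Definition total : Prop :=
  forall s : ground, wr (@rank S) s -> transl s <> None.

Definition la_uniform : Prop :=
  exists rho : Q M -> P M,
    [/\ (forall q (s : ground), wr (@rank S) s ->
           (qtrans q s <> None <-> delta no_lav s = rho q)),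
        (forall p q, q \in leaves (ax M p) -> rho q = p),
        (forall q a ps r, rhs M q a ps = Some r ->
           forall q' i, (q', i) \in leaves r -> onth ps i = Some (rho q')) &
        (forall q a ps, size ps = rank a ->
           (rhs M q a ps <> None <-> trans M a ps = rho q))].

Definition earliest : Prop :=
  ~ exists (q : Q M) (d : D),
      forall s : ground, wr (@rank S) s -> forall t, qtrans q s = Some t ->
        root_is d t.

Definition reachable (q : Q M) : Prop :=
  exists C p t, context C /\ out_ctx C p = Some t /\ (q, p) \in leaves t.

Definition canonical : Prop :=
  [/\ total, la_uniform, earliest,
      (forall q, reachable q) &
      (forall q q', q <> q' ->
         ~ (forall s : ground, wr (@rank S) s -> qtrans q s = qtrans q' s))].

Definition is_dtpla : Prop := 2 <= #|P M|.
Definition is_dtop : Prop := #|P M| = 1%N.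

(* pref(M,C) computed from the family (M(C[p]))_p *)
Definition pref (ts : P M -> tree D (Q M * P M)) : tree D (option (Q M * P M)) :=
  glb (map ts (enum (P M))).

Definition diftup (T : {ffun P M -> tree D (Q M * P M)}) : Prop :=
  exists C (ts : P M -> tree D (Q M * P M)) (v : seq nat),
    [/\ context C,
        (forall p, out_ctx C p = Some (ts p)),
        is_bot_node (pref ts) v &
        (forall p, subtree (ts p) v = Some (T p))].
End Dtla.
Arguments wf_dtla {S D} M.
Arguments delta {S D} M {L} lav t.
Arguments qsem {S D} M {L} lav t q.
Arguments out {S D} M {L} lav t.
Arguments ground S : clear implicits.
Arguments qtrans {S D} M q s.
Arguments transl {S D} M s.
Arguments context S C : clear implicits.
Arguments out_ctx {S D} M C p.
Arguments total {S D} M.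
Arguments la_uniform {S D} M.
Arguments earliest {S D} M.
Arguments reachable {S D} M q.
Arguments canonical {S D} M.
Arguments is_dtpla {S D} M.
Arguments is_dtop {S D} M.
Arguments pref {S D} M ts.
Arguments diftup {S D} M T.

Definition equivalent (S D : ralph) (M N : dtla S D) : Prop :=
  forall s : ground S, wr (@rank S) s -> transl M s = transl N s.

(* aheadness mapping from the dtop N to M; the hole of N gets N's unique
   look-ahead state pN (bot) *)
Definition aheadness (S D : ralph) (M N : dtla S D)
  (phi : Q N -> P M -> tree D (Q M * P M)) : Prop :=
  forall C, context S C -> forall (p : P M) (pN : P N),
    out_ctx M C p = omap (tbind (fun x : Q N * P N => phi x.1 p)) (out_ctx N C pN).
Arguments equivalent {S D} M N.
Arguments aheadness {S D} M N phi.

(* Fix a context C, the unique look-ahead state pN of N, and an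
   occurrence <q,pN> at node u of N(C).  By aheadness,
   M(C[p]) = N(C)[<q',pN> <- phi(q',p)], so the family (M(C[p]))_p is the
   fixed tree N(C) with the tuples (phi(q',p))_p plugged into its leaves,
   and pref(M,C) = N(C)[<q',pN> <- pref(phi(q',.))].
   The key fact is that pref(phi(q,.)) is the bottom symbol: it is not a
   common leaf, since the leaves of phi(q,p) carry look-ahead state p and
   M has two look-ahead states; and it is not a common root symbol d,
   since by equivalence of M and N on C[s], q_N(s) is phi(q,delta_M(s))
   with the q'_M(s) plugged in, so q_N(s) would always start with d,
   against the earliness of N.  Hence the bottom nodes of pref(M,C) are
   exactly the occurrences of states of N in N(C), the tuple below the
   occurrence of q being psi(q): this gives surjectivity, and, with the
   reachability of every state of N, that psi lands in diftup(M).
   Injectivity follows from the same description of q_N(s) and the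
   distinctness of the translations of the states of N. *)
From Pilot Require Import Defs.
From mathcomp Require Import all_boot.
From Stdlib Require List.
Set Implicit Arguments. Unset Strict Implicit. Unset Printing Implicit Defensive.

Definition tree_ind2 (F L : Type) (Pr : tree F L -> Prop)
  (HL : forall l, Pr (Leaf l))
  (HN : forall a ts, (forall t, List.In t ts -> Pr t) -> Pr (Node a ts)) :
  forall t, Pr t :=
  fix IH t := match t with
  | Leaf l => HL l
  | Node a ts => HN a ts ((fix G ts : forall t, List.In t ts -> Pr t :=
       match ts with
       | nil => fun t H => False_ind _ H
       | cons t0 ts' => fun t H => match H with
           | or_introl E => eq_ind t0 Pr (IH t0) t E
           | or_intror H' => G ts' t H' end end) ts) end.

Lemma onth_In T (s : seq T) i x : onth s i = Some x -> List.In x s.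
Proof. elim: s i => [|y s IH] [|i] //=; [by case=> ->; left | by move/IH; right]. Qed.

Lemma mem_In (T : eqType) (x : T) s : x \in s -> List.In x s.
Proof. elim: s => //= y s IH; rewrite inE => /orP[/eqP ->|/IH]; by [left|right]. Qed.

Lemma map_ext_In A B (f g : A -> B) s :
  (forall x, List.In x s -> f x = g x) -> map f s = map g s.
Proof. elim: s => //= x s IH H; rewrite H ?IH //; [by move=> y Hy; apply: H; right | by left]. Qed.

Section Substitution.
Variable F : Type.

Lemma tbind_assoc L1 L2 L3 (f : L1 -> tree F L2) (g : L2 -> tree F L3) t :
  tbind g (tbind f t) = tbind (fun x => tbind g (f x)) t.
Proof.
elim/tree_ind2: t => //= a ts IH; congr Node; rewrite -map_comp; exact: map_ext_In.
Qed.

Lemma tbindo_tbind L1 L2 L3 (f : L1 -> tree F L2) (g : L2 -> option (tree F L3)) t :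
  tbindo g (tbind f t) = tbindo (fun x => tbindo g (f x)) t.
Proof.
elim/tree_ind2: t => //= a ts IH; rewrite -map_comp; congr omap; congr optseq.
exact: map_ext_In.
Qed.

Lemma tbindo_ext L1 L2 (f g : L1 -> option (tree F L2)) r :
  (forall x, f x = g x) -> tbindo f r = tbindo g r.
Proof.
move=> H; elim/tree_ind2: r => //= a ts IH; congr omap; congr optseq; exact: map_ext_In.
Qed.

Lemma optseq_map_obind A B C (o : A -> option B) (h : B -> option C) (s : seq A) :
  optseq (map (fun r => obind h (o r)) s) =
  obind (fun xs => optseq (map h xs)) (optseq (map o s)).
Proof.
elim: s => //= x s ->; case: (o x) => [b|] /=; last by case: (optseq (map o s)).
by case: (optseq (map o s)) => [xs|] /=; case: (h b).
Qed.

Lemma tbindo_assoc L1 L2 L3 (f : L1 -> option (tree F L2))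
  (g : L2 -> option (tree F L3)) t :
  tbindo (fun x => obind (tbindo g) (f x)) t = obind (tbindo g) (tbindo f t).
Proof.
elim/tree_ind2: t => //= a ts IH.
rewrite (map_ext_In (g := fun r => obind (tbindo g) (tbindo f r))) //.
by rewrite optseq_map_obind; case: (optseq (map (tbindo f) ts)).
Qed.

Lemma wr_tbind (ar : F -> nat) L1 L2 (f : L1 -> tree F L2) t :
  wr ar t -> (forall l, wr ar (f l)) -> wr ar (tbind f t).
Proof.
move=> + Hf; elim/tree_ind2: t => //= a ts IH /andP[Hs Ha].
rewrite size_map Hs /=; elim: ts IH Ha {Hs} => //= t ts IHts IH /andP[H1 H2].
rewrite IH ?IHts //; [by move=> y Hy; apply: IH; right | by left].
Qed.

Lemma tbind_root L1 L2 (h : L1 -> tree F L2) d t :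
  root_is d t -> root_is d (tbind h t).
Proof. by case: t. Qed.

Lemma tbindo_root L1 L2 (g : L1 -> option (tree F L2)) d t a :
  root_is d t -> tbindo g t = Some a -> root_is d a.
Proof. by case: t => //= d' ts ->; case: (optseq _) => //= ? [<-]. Qed.
End Substitution.

Section Navigation.
Variable F : Type.

Lemma optseq_onth A B (f : A -> option B) s s' i y :
  optseq (map f s) = Some s' -> onth s i = Some y ->
  exists z, f y = Some z /\ onth s' i = Some z.
Proof.
elim: s s' i => [|x s IH] s' i /=; first by case: i.
case E: (f x) => [b|] //; case E2: (optseq (map f s)) => [xs|] //.
case=> <-; case: i => [|i] /=; first by case=> <-; exists b.
exact: IH E2.
Qed.

Lemma optseq_onth_inv A B (f : A -> option B) s s' i z :
  optseq (map f s) = Some s' -> onth s' i = Some z ->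
  exists y, onth s i = Some y /\ f y = Some z.
Proof.
elim: s s' i => [|x s IH] s' i /=; first by case=> <-; case: i.
case E: (f x) => [b|] //; case E2: (optseq (map f s)) => [xs|] //.
case=> <-; case: i => [|i] /=; first by case=> <-; exists x.
exact: IH E2.
Qed.

Lemma subtree_tbind_leaf L1 L2 (h : L1 -> tree F L2) n u x w :
  subtree n u = Some (Leaf x) -> subtree (tbind h n) (u ++ w) = subtree (h x) w.
Proof.
elim: u n => [|i u IH] [l|a ns] //=; first by case=> ->.
rewrite onth_map; case: (onth ns i) => [n'|] //=; exact: IH.
Qed.

Lemma subtree_tbind_inv L1 L2 (h : L1 -> tree F L2) n v y :
  subtree (tbind h n) v = Some (Leaf y) ->
  exists u w x, [/\ v = u ++ w, subtree n u = Some (Leaf x)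
                  & subtree (h x) w = Some (Leaf y)].
Proof.
elim: v n => [|i v IH] [l|a ns] //=.
- by move=> H; exists [::], [::], l.
- by move=> H; exists [::], (i :: v), l.
- rewrite onth_map; case E: (onth ns i) => [n'|] //= /IH [u [w [x [-> H1 H2]]]].
  by exists (i :: u), w, x; rewrite /= E.
Qed.

Lemma tbindo_subtree L1 L2 (g : L1 -> option (tree F L2)) n t u x :
  tbindo g n = Some t -> subtree n u = Some (Leaf x) ->
  exists t', g x = Some t' /\ subtree t u = Some t'.
Proof.
elim: u n t => [|i u IH] [l|a ns] t //=; first by move=> H [<-]; exists t.
case E: (optseq (map (tbindo g) ns)) => [ts|] //= [<-] /=.
case E2: (onth ns i) => [n'|] //= H.
have [z [Hz ->]] := optseq_onth E E2.
exact: IH Hz H.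
Qed.

Lemma subtree_tmapl L1 L2 (h : L1 -> L2) t u :
  subtree (tmapl h t) u = omap (@tmapl F _ _ h) (subtree t u).
Proof.
elim: u t => [|i u IH] [l|a ns] //=.
by rewrite onth_map; case: (onth ns i).
Qed.
End Navigation.

Section Leaves.
Variable F : Type.

Lemma leaves_onth (L : eqType) (ns : seq (tree F L)) i n0 x :
  onth ns i = Some n0 -> x \in leaves n0 -> x \in flatten (map (@leaves F L) ns).
Proof.
elim: ns i => [|m ns IH] [|i] //= => [[->]|H] Hx; rewrite mem_cat ?Hx //.
by rewrite (IH _ H Hx) orbT.
Qed.

Lemma leaves_inv (L : eqType) (ns : seq (tree F L)) x :
  x \in flatten (map (@leaves F L) ns) ->
  exists i n0, onth ns i = Some n0 /\ x \in leaves n0.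
Proof.
elim: ns => [|m ns IH] //=; rewrite mem_cat => /orP[H|/IH [i [n0 [H1 H2]]]].
- by exists 0, m.
- by exists i.+1, n0.
Qed.

Lemma leaves_pos (L : eqType) (t : tree F L) x :
  x \in leaves t -> exists u, subtree t u = Some (Leaf x).
Proof.
elim/tree_ind2: t => [l|a ns IH] /=.
- by rewrite inE => /eqP ->; exists [::].
- move=> /leaves_inv [i [n0 [H1 H2]]].
  have [u Hu] := IH _ (onth_In H1) H2.
  by exists (i :: u); rewrite /= H1.
Qed.

Lemma subtree_leaf_mem (L : eqType) (n : tree F L) u x :
  subtree n u = Some (Leaf x) -> x \in leaves n.
Proof.
elim: u n => [|i u IH] [l|a ns] //=; first by case=> ->; rewrite mem_seq1.
case E: (onth ns i) => [m|] // /IH Hm; exact: leaves_onth E Hm.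
Qed.

Lemma leaves_tbindo (L1 L2 : eqType) (f : L1 -> option (tree F L2)) r t y :
  tbindo f r = Some t -> y \in leaves t ->
  exists x, x \in leaves r /\ exists t', f x = Some t' /\ y \in leaves t'.
Proof.
elim/tree_ind2: r t => [l|a ns IH] t /=.
- by move=> H Hy; exists l; split; [rewrite inE | exists t].
- case E: (optseq (map (tbindo f) ns)) => [ts|] //= [<-] /= /leaves_inv [i [t0 [H1 H2]]].
  have [n0 [Hn0 Ht0]] := optseq_onth_inv E H1.
  have [x [Hx Hx']] := IH _ (onth_In Hn0) _ Ht0 H2.
  by exists x; split => //; exact: leaves_onth Hn0 Hx.
Qed.

Lemma leaves_tbind (L1 L2 : eqType) (h : L1 -> tree F L2) n x y :
  x \in leaves n -> y \in leaves (h x) -> y \in leaves (tbind h n).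
Proof.
elim/tree_ind2: n => [l|a ns IH] /=; first by rewrite inE => /eqP ->.
move=> /leaves_inv [i [n0 [H1 H2]]] Hy.
apply: (@leaves_onth _ _ i (tbind h n0)); first by rewrite onth_map H1.
exact: IH (onth_In H1) H2 Hy.
Qed.

Lemma leaves_tmapl_const L1 (L2 : eqType) (p : L2) (C : tree F L1) z :
  z \in leaves (tmapl (fun _ => p) C) -> z = p.
Proof.
rewrite /tmapl; elim/tree_ind2: C => [l|a ns IH] /=; first by rewrite inE => /eqP.
move=> /leaves_inv [i [n0 [H1 H2]]]; move: H1; rewrite onth_map.
case E: (onth ns i) => [m|] //= [Em]; subst n0; exact: IH (onth_In E) H2.
Qed.
End Leaves.

Section GreatestLowerBound.
Variables F L : eqType.

Lemma meet_tbind L1 (f g : L1 -> tree F (option L)) n :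
  meet (tbind f n) (tbind g n) = tbind (fun x => meet (f x) (g x)) n.
Proof.
elim/tree_ind2: n => [l|a ns IH] //=.
rewrite eqxx !size_map eqxx /=; congr Node.
elim: ns IH => //= m ns IHns IH; rewrite IH; last by left.
by rewrite IHns // => y Hy; apply: IH; right.
Qed.

Lemma lift_bot_tbind L1 (h : L1 -> tree F L) n :
  lift_bot (tbind h n) = tbind (fun x => lift_bot (h x)) n.
Proof. by rewrite /lift_bot /tmapl tbind_assoc. Qed.

Lemma glb_tbind L1 A (f : A -> L1 -> tree F L) n p0 ps :
  glb (map (fun p => tbind (f p) n) (p0 :: ps)) =
  tbind (fun x => glb (map (fun p => f p x) (p0 :: ps))) n.
Proof.
rewrite /=; elim: ps => [|p ps IH] /=; first exact: lift_bot_tbind.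
by rewrite IH lift_bot_tbind meet_tbind.
Qed.

Lemma meet_leaf (a b : tree F (option L)) x :
  meet a b = Leaf (Some x) -> a = Leaf (Some x) /\ b = Leaf (Some x).
Proof.
case: a => [y|c ts]; case: b => [z|d us] //=; last by case: ifP.
by case: eqP => [<- ->|].
Qed.

Lemma meet_node (a b : tree F (option L)) d ch :
  meet a b = Node d ch -> root_is d a /\ root_is d b.
Proof.
case: a => [y|c ts]; case: b => [z|e us] //=; first by case: eqP.
by case: ifP => // /andP[/eqP <- _] [->].
Qed.

Lemma glb_leaf (ts : seq (tree F L)) x :
  glb ts = Leaf (Some x) -> forall u, List.In u ts -> u = Leaf x.
Proof.
case: ts => [|t ts] //=; elim: ts => [|v ts IH] /=.
- by case: t => // y [->] u [<-|].
- move=> /meet_leaf [Hv /IH Hts] u [<-|[<-|Hu]].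
  + exact: Hts (or_introl _).
  + by case: v Hv => // y [->].
  + exact: Hts (or_intror _).
Qed.

Lemma glb_node (ts : seq (tree F L)) d ch :
  glb ts = Node d ch -> forall u, List.In u ts -> root_is d u.
Proof.
case: ts => [|t ts] //=; elim: ts ch => [|v ts IH] ch /=.
- by case: t => // c cs [-> _] u [<-|].
- move=> /meet_node [Hv]; case Er: foldr => [|c cs] //= Ec; subst c.
  have Hts := IH _ Er.
  move=> u [<-|[<-|Hu]]; [exact: Hts (or_introl _) | | exact: Hts (or_intror _)].
  by case: v Hv.
Qed.
End GreatestLowerBound.

Section ContextSemantics.
Variables (S D : ralph) (K : dtla S D).

Lemma delta_plug (C : tree S unit) (s : ground S) :
  delta K (no_lav K) (tbind (fun _ => s) C) =
  delta K id (tmapl (fun _ => delta K (no_lav K) s) C).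
Proof.
elim/tree_ind2: C => //= a cs IH; congr (trans K a); rewrite -!map_comp.
exact: map_ext_In.
Qed.

Lemma qsem_plug (C : tree S unit) (s : ground S) q :
  qsem K (no_lav K) (tbind (fun _ => s) C) q =
  obind (tbindo (fun x : Q K * P K => qsem K (no_lav K) s x.1))
        (qsem K id (tmapl (fun _ => delta K (no_lav K) s) C) q).
Proof.
elim/tree_ind2: C q => //= a cs IH q.
have -> : map (delta K (no_lav K)) (map (tbind (fun=> s)) cs) =
          map (delta K id) (map (tbind (fun l => Leaf (delta K (no_lav K) s))) cs).
  by rewrite -!map_comp; apply: map_ext_In => c _ /=; exact: delta_plug.
case: (rhs K q a _) => [r|] //=.
rewrite -tbindo_assoc; apply: tbindo_ext => -[q' i] /=.
elim: cs i IH {r} => [|c cs IHcs] [|i] IH //=.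
- by rewrite IH //; left.
- by apply: IHcs => y Hy; apply: IH; right.
Qed.

Lemma out_plug (C : tree S unit) (s : ground S) :
  out K (no_lav K) (tbind (fun _ => s) C) =
  obind (tbindo (fun x : Q K * P K => qsem K (no_lav K) s x.1))
        (out_ctx K C (delta K (no_lav K) s)).
Proof.
rewrite /out_ctx /out delta_plug -tbindo_assoc; apply: tbindo_ext => q.
exact: qsem_plug.
Qed.

Lemma nth_map_opt A B C (g : A -> B -> option C) ts i q z :
  nth (fun _ => None) (map g ts) i q = Some z ->
  exists t0, onth ts i = Some t0 /\ g t0 q = Some z.
Proof. by elim: ts i => [|t ts IH] [|i] //=; [exists t | exact: IH]. Qed.

Lemma qsem_leaves (L : eqType) (lav : L -> P K) t q r y :
  qsem K lav t q = Some r -> y \in leaves r -> y.2 \in leaves t.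
Proof.
elim/tree_ind2: t q r => [l|a cs IH] q r /=.
- by case=> <- /=; rewrite !mem_seq1 => /eqP ->.
- case: (rhs K q a _) => [r0|] // H Hy.
  have [x [Hx [t' [Ht' Hy']]]] := leaves_tbindo H Hy.
  have [c [Hc Hc']] := nth_map_opt Ht'.
  exact: leaves_onth Hc (IH _ (onth_In Hc) _ _ Hc' Hy').
Qed.

Lemma out_ctx_leaves C p t y :
  out_ctx K C p = Some t -> y \in leaves t -> y.2 = p.
Proof.
rewrite /out_ctx /out => H Hy.
have [x [_ [t' [Ht' Hy']]]] := leaves_tbindo H Hy.
exact: leaves_tmapl_const (qsem_leaves Ht' Hy').
Qed.

Lemma In_enum (ts : P K -> tree D (Q K * P K)) p :
  List.In (ts p) (map ts (enum (P K))).
Proof. by apply: List.in_map; apply: mem_In; rewrite mem_enum. Qed.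

Lemma pref_tbind L1 (f : P K -> L1 -> tree D (Q K * P K)) n :
  0 < #|P K| ->
  pref K (fun p => tbind (f p) n) = tbind (fun x => pref K (fun p => f p x)) n.
Proof.
rewrite /pref cardE; case: (enum (P K)) => [|p0 ps] //= _.
exact: (glb_tbind f n p0 ps).
Qed.

Lemma pref_ext (ts ts' : P K -> tree D (Q K * P K)) :
  (forall p, ts p = ts' p) -> pref K ts = pref K ts'.
Proof. by move=> E; rewrite /pref (eq_map E). Qed.

Lemma pref_leaf (ts : P K -> tree D (Q K * P K)) x :
  pref K ts = Leaf (Some x) -> forall p, ts p = Leaf x.
Proof. by move=> /glb_leaf H p; apply: H; exact: In_enum. Qed.

Lemma pref_node (ts : P K -> tree D (Q K * P K)) d ch :
  pref K ts = Node d ch -> forall p, root_is d (ts p).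
Proof. by move=> /glb_node H p; apply: H; exact: In_enum. Qed.
End ContextSemantics.

Section Aheadness.
Variables (S D : ralph) (M N : dtla S D) (phi : Q N -> P M -> tree D (Q M * P M)).
Hypotheses (equivMN : equivalent M N) (totalM : Defs.total M)
           (aheadMN : aheadness M N phi) (dtopN : is_dtop N).

Lemma dtop_state_unique (p p' : P N) : p = p'.
Proof. by apply/fintype_le1P; rewrite dtopN. Qed.

Lemma aheadness_out C pN n p :
  context S C -> out_ctx N C pN = Some n ->
  out_ctx M C p = Some (tbind (fun x => phi x.1 p) n).
Proof. by move=> HC Hn; rewrite (aheadMN HC p pN) Hn. Qed.

Definition occurrence (q : Q N) C (pN : P N) n u : Prop :=
  [/\ context S C, out_ctx N C pN = Some n & subtree n u = Some (Leaf (q, pN))].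

Lemma reachable_occurrence q :
  reachable N q -> exists C pN n u, occurrence q C pN n u.
Proof.
move=> [C [pN [n [HC [Hn Hq]]]]]; have [u Hu] := leaves_pos Hq.
by exists C, pN, n, u.
Qed.

(* By equivalence on C[s], q_N(s) is phi(q, delta_M(s)) with the
   translations q'_M(s) plugged in. *)
Lemma occurrence_translation q C pN n u :
  occurrence q C pN n u ->
  forall s : ground S, wr (@rank S) s ->
  exists aM, tbindo (fun x => qsem M (no_lav M) s x.1) (phi q (delta M (no_lav M) s))
               = Some aM
          /\ qtrans N q s = Some (forget aM).
Proof.
move=> [HC Hn Hu] s Hs.
have HCs : wr (@rank S) (tbind (fun _ => s) C) by apply: wr_tbind HC.1 _.
have EM : out M (no_lav M) (tbind (fun _ => s) C) =
   tbindo (fun x => tbindo (fun x => qsem M (no_lav M) s x.1)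
                           (phi x.1 (delta M (no_lav M) s))) n.
  by rewrite out_plug (aheadness_out _ HC Hn) /= tbindo_tbind.
have EN : out N (no_lav N) (tbind (fun _ => s) C) =
   tbindo (fun x => qsem N (no_lav N) s x.1) n.
  by rewrite out_plug (dtop_state_unique (delta N (no_lav N) s) pN) Hn.
have := equivMN HCs; have := totalM HCs; rewrite /transl EM EN.
case E1: (tbindo _ n) => [tM|] //= _; case E2: (tbindo _ n) => [tN|] //= [Ef].
have [aM [HaM HuM]] := tbindo_subtree E1 Hu.
have [aN [HaN HuN]] := tbindo_subtree E2 Hu.
exists aM; split => //; rewrite /qtrans HaN /=.
have HfM : subtree (forget tM) u = Some (forget aM).
  by have := subtree_tmapl (fun x : Q M * void => x.2) tM u; rewrite HuM; apply.
have HfN : subtree (forget tN) u = Some (forget aN).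
  by have := subtree_tmapl (fun x : Q N * void => x.2) tN u; rewrite HuN; apply.
by move: HfM; rewrite Ef HfN => -[->].
Qed.

Lemma phi_injective_translation q1 q2 C1 pN1 n1 u1 C2 pN2 n2 u2 :
  occurrence q1 C1 pN1 n1 u1 -> occurrence q2 C2 pN2 n2 u2 ->
  (forall p, phi q1 p = phi q2 p) ->
  forall s : ground S, wr (@rank S) s -> qtrans N q1 s = qtrans N q2 s.
Proof.
move=> Ho1 Ho2 Ephi s Hs.
have [a1 [Ha1 ->]] := occurrence_translation Ho1 Hs.
have [a2 [Ha2 ->]] := occurrence_translation Ho2 Hs.
by move: Ha1; rewrite Ephi Ha2 => -[->].
Qed.

Hypotheses (earliestN : earliest N) (dtplaM : is_dtpla M).

(* The tuple of an occurring state has bottom as its glb: its members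
   carry distinct look-ahead states in their leaves, and a common root
   symbol would be output first by q, against earliness of N. *)
Lemma pref_phi_bot q C pN n u :
  occurrence q C pN n u -> pref M (phi q) = Leaf None.
Proof.
move=> Ho; have [HC Hn Hu] := Ho.
case E: (pref M (phi q)) => [[x|]|d ch] //; exfalso.
- have [p1 [p2 [_ _ Hp12]]] : exists p1 p2 : P M, [/\ p1 \in P M, p2 \in P M & p1 != p2].
    exact/card_gt1P.
  have Hx p : x.2 = p.
    apply: out_ctx_leaves (aheadness_out p HC Hn) _.
    apply: leaves_tbind (subtree_leaf_mem Hu) _.
    by rewrite /= (pref_leaf E) mem_seq1.
  by move: Hp12; rewrite -(Hx p1) -(Hx p2) eqxx.
- apply: earliestN; exists q, d => s Hs t.
  have [aM [HaM ->]] := occurrence_translation Ho Hs.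
  move=> [<-]; apply: tbind_root.
  exact: tbindo_root (pref_node E _) HaM.
Qed.

Lemma pref_occurrence_bot q C pN n u :
  occurrence q C pN n u ->
  is_bot_node (pref M (fun p => tbind (fun x => phi x.1 p) n)) u.
Proof.
move=> Ho; have [_ _ Hu] := Ho.
rewrite /is_bot_node pref_tbind ?(ltnW dtplaM) //.
by rewrite -(cats0 u) (subtree_tbind_leaf _ _ Hu) (pref_phi_bot Ho).
Qed.

Lemma pref_bot_occurrence C pN n v :
  context S C -> out_ctx N C pN = Some n ->
  is_bot_node (pref M (fun p => tbind (fun x => phi x.1 p) n)) v ->
  exists q, occurrence q C pN n v.
Proof.
move=> HC Hn; rewrite /is_bot_node pref_tbind ?(ltnW dtplaM) //.
move=> /= Hb; have [u [w [[q pN'] [-> Hu Hw]]]] := subtree_tbind_inv Hb.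
rewrite (dtop_state_unique pN' pN) in Hu.
have Ho : occurrence q C pN n u by [].
move: Hw; rewrite /= (pref_phi_bot Ho); case: w => // _.
by exists q; rewrite cats0.
Qed.
End Aheadness.

Theorem mainTheorem5 (S D : ralph) (M N : dtla S D)
  (phi : Q N -> P M -> tree D (Q M * P M)) :
  wf_dtla M -> wf_dtla N ->
  canonical M -> canonical N -> equivalent M N ->
  is_dtpla M -> is_dtop N ->
  aheadness M N phi ->
  let psi := fun q : Q N => [ffun p : P M => phi q p] in
  [/\ (forall q, diftup M (psi q)),
      injective psi &
      (forall T, diftup M T -> exists q, psi q = T)].
Proof.
move=> _ _ [totM _ _ _ _] [_ _ earN reachN distN] equivMN dtplaM dtopN aheadMN psi.
have psiE q p : psi q p = phi q p by rewrite ffunE.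
have bot_occ := pref_occurrence_bot equivMN totM aheadMN dtopN earN dtplaM.
have occ_bot := pref_bot_occurrence equivMN totM aheadMN dtopN earN dtplaM.
split.
- move=> q; have [C [pN [n [u Ho]]]] := reachable_occurrence (reachN q).
  have [HC Hn Hu] := Ho.
  exists C, (fun p => tbind (fun x => phi x.1 p) n), u; split=> //.
  + by move=> p; exact: (aheadness_out aheadMN p HC Hn).
  + exact: bot_occ Ho.
  + by move=> p; rewrite -(cats0 u) (subtree_tbind_leaf _ _ Hu) psiE.
- move=> q1 q2 Epsi; case: (eqVneq q1 q2) => // /eqP Hne; exfalso; apply: (distN _ _ Hne).
  have [C1 [pN1 [n1 [u1 Ho1]]]] := reachable_occurrence (reachN q1).
  have [C2 [pN2 [n2 [u2 Ho2]]]] := reachable_occurrence (reachN q2).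
  apply: (phi_injective_translation equivMN totM aheadMN dtopN Ho1 Ho2).
  by move=> p; rewrite -!psiE Epsi.
- move=> T [C [ts [v [HC Hts Hbot HT]]]].
  have /card_gt0P [pN _] : 0 < #|P N| by rewrite dtopN.
  have /card_gt0P [p0 _] : 0 < #|P M| by exact: ltnW dtplaM.
  have [n En] : exists n, out_ctx N C pN = Some n.
    by move: (Hts p0); rewrite (aheadMN C HC p0 pN); case: out_ctx => // n _; exists n.
  have tsE p : ts p = tbind (fun x => phi x.1 p) n.
    by move: (Hts p); rewrite (aheadness_out aheadMN p HC En) => -[].
  rewrite /is_bot_node (pref_ext tsE) in Hbot.
  have [q [_ _ Hq]] := occ_bot _ _ _ _ HC En Hbot.
  exists q; apply/ffunP => p; move: (HT p).
  by rewrite psiE tsE -(cats0 v) (subtree_tbind_leaf _ _ Hq) => -[].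
Qed.
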